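(* If all locks are fair and the underlying system scheduler is fair, then every invocation of a method (begin, read, write, tryC) of the algorithm KSFTM eventually completes.
   Context: Algorithm KSFTM (parameters: integer $K\ge1$, constants $C>0$, $incVal\ge1$). A global atomic counter, initially 1. Each t-object $x$ stores at most $K$ versions $\langle ts, val, rl, vrt\rangle$. Each transaction $T_i$ has timestamps $its_i, cts_i, wts_i = cts_i + C(cts_i-its_i)$, limits $tltl_i, tutl_i$, a commit time $ct_i$, a flag $valid_i$ and a status, protected by a per-transaction lock; each t-object has a lock. begin: reads and atomically increments the counter, initializes the transaction's fields; no locks, no loops. read($x$): if $x$ is local returns it; otherwise acquires the lock of $x$ and then the lock of $T_i$, finds the version with largest $ts<wts_i$ and the one with smallest $ts>wts_i$, updates $tltl_i,tutl_i$, possibly aborts (releasing all its locks), otherwise appends $T_i$ to that version's reader list, releases the locks and returns. write: stores locally. tryC: acquires the locks of all t-objects in its write set in a fixed predefined global order, then the locks of all transactions in the reader lists of the relevant versions together with its own lock, again in a fixed predefined global order; then performs loops only over the (finite) write set and the finite reader lists (validation, marking or aborting, updating limits, incrementing the counter, installing new versions), and finally releases all locks; any abort releases all locks held. Fairness of a scheduler means no thread is forever delayed or crashed; a fair lock is eventually granted to every requester once it is repeatedly released. *)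

(* Only the aspects that matter for
   termination of method invocations are modelled: which locks are acquired,
   in which order, the finiteness of the remaining (lock-free) work, and the
   release of all held locks when a method returns (normally or by abort). *)
From mathcomp Require Import all_boot.
Set Implicit Arguments. Unset Strict Implicit. Unset Printing Implicit Defensive.

(* Locks: one per t-object x (Obj x) and one per transaction T_i (Tx i). *)
Inductive lock := Obj of nat | Tx of nat.

Definition lock_eq_dec (a b : lock) : {a = b} + {a <> b}.
Proof. decide equality; exact: (decP eqP). Defined.

(* Atomic actions of a method invocation: a lock acquisition, or one
   lock-free local step (reading/writing fields, one loop iteration, ...). *)
Inductive action := Acq of lock | Local.

(* The methods of KSFTM; [i] is the id of the invoking transaction, [x] the
   t-object read. *)
Inductive meth := MBegin | MRead of nat & nat | MWrite | MTryC of nat .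

(* An invocation: which method, and the (finite) sequence of atomic actions it
   performs before returning.  Returning (commit or abort) releases all locks
   held by the invoking thread in one step. *)
Record invocation := Inv { imeth : meth; iacts : seq action }.

Definition is_local (a : action) : bool := if a is Local then true else false.
Definition acq_of (a : action) : seq lock := if a is Acq l then [:: l] else [::].
Definition acquisitions (s : seq action) : seq lock := flatten (map acq_of s).

(* Shapes of invocations of KSFTM, as described:
   - begin / write: no locks, finitely many local steps;
   - read(x) by T_i: either x is local (no locks), or lock of x then lock of
     T_i, then finitely many local steps (possibly ending in abort);
   - tryC by T_i: locks of the write set (t-objects) in the fixed global order,
     then locks of the reader-list transactions together with its own lock
     T_i in the fixed global order, with finitely many local steps. *)
Definition ksftm_shape (iv : invocation) : Prop :=
  match imeth iv with
  | MBegin | MWrite => all is_local (iacts iv)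
  | MRead x i =>
      all is_local (iacts iv) \/
      exists rest, iacts iv = Acq (Obj x) :: Acq (Tx i) :: rest /\ all is_local rest
  | MTryC i =>
      exists (ws ts : seq nat),
        sorted ltn ws /\ sorted ltn ts /\ i \in ts /\
        acquisitions (iacts iv) = map Obj ws ++ map Tx ts
  end.

Record state := St {
  idx   : nat -> nat;            (* index of the current invocation of thread t *)
  pc    : nat -> nat;            (* number of actions of it already performed *)
  owner : lock -> option nat
}.

Definition init_state : state := St (fun _ => 0) (fun _ => 0) (fun _ => None).

(* [prog t n] : the n-th invocation made by thread t ([None]: t makes no
   n-th invocation, it has stopped invoking methods). *)
Definition program := nat -> nat -> option invocation.

Inductive step (prog : program) (s : state) (t : nat) : state -> Prop :=
| StepLocal iv :
    prog t (idx s t) = Some iv -> pc s t < size (iacts iv) ->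
    nth Local (iacts iv) (pc s t) = Local ->
    step prog s t (St (idx s) (fun u => if u == t then (pc s t).+1 else pc s u) (owner s))
| StepAcq iv l :
    prog t (idx s t) = Some iv -> pc s t < size (iacts iv) ->
    nth Local (iacts iv) (pc s t) = Acq l -> owner s l = None ->
    step prog s t (St (idx s) (fun u => if u == t then (pc s t).+1 else pc s u)
                      (fun l' => if lock_eq_dec l' l then Some t else owner s l'))
| StepBlocked iv l u :
    prog t (idx s t) = Some iv -> pc s t < size (iacts iv) ->
    nth Local (iacts iv) (pc s t) = Acq l -> owner s l = Some u ->
    step prog s t s
| StepReturn iv :
    prog t (idx s t) = Some iv -> pc s t = size (iacts iv) ->
    step prog s t (St (fun u => if u == t then (idx s t).+1 else idx s u)
                      (fun u => if u == t then 0 else pc s u)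
                      (fun l => if owner s l is Some u then
                                  (if u == t then None else Some u) else None))
| StepIdle :
    prog t (idx s t) = None -> step prog s t s.

Definition execution (prog : program) (ex : nat -> state) (sched : nat -> nat) : Prop :=
  ex 0 = init_state /\ forall k, step prog (ex k) (sched k) (ex k.+1).

Definition threads_below (N : nat) (sched : nat -> nat) : Prop :=
  forall k, sched k < N.

Definition fair_scheduler (N : nat) (sched : nat -> nat) : Prop :=
  forall t i, t < N -> exists j, i <= j /\ sched j = t.

Definition requesting (prog : program) (s : state) (t : nat) (l : lock) : Prop :=
  exists iv, prog t (idx s t) = Some iv /\ pc s t < size (iacts iv) /\
             nth Local (iacts iv) (pc s t) = Acq l.

Definition released_at (ex : nat -> state) (l : lock) (k : nat) : Prop :=
  owner (ex k) l <> None /\ owner (ex k.+1) l = None.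

(* Fair locks: a requester that keeps requesting a lock which is repeatedly
   (infinitely often) released is eventually granted it, i.e. it cannot stay
   a requester forever. *)
Definition fair_locks (prog : program) (ex : nat -> state) : Prop :=
  forall t l i,
    (forall j, i <= j -> requesting prog (ex j) t l) ->
    ~ (forall j, exists k, j <= k /\ released_at ex l k).

(* Deadlock freedom of ordered locking.  Every KSFTM method acquires its locks
   in increasing [lock_lt] order (t-objects by index, then transactions by
   index) and releases all of them when it returns.  Suppose an invocation
   never returns: its thread eventually keeps requesting one lock l.  By lock
   fairness l is released only finitely often, and it cannot stay free
   forever, since the fair scheduler would then let the requester take it; so
   some thread holds l forever.  That thread never returns either, hence is
   itself eventually stuck requesting some lock l', and l < l' because it
   already holds l.  Iterating gives arbitrarily long chains of blocked threads
   on strictly increasing locks; as a blocked thread requests only one lock,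
   these threads are distinct, which is impossible with finitely many threads. *)

From HB Require Import structures.
From mathcomp Require Import all_boot zify.
From Stdlib Require Import Classical.
Set Implicit Arguments. Unset Strict Implicit. Unset Printing Implicit Defensive.

HB.instance Definition _ := comparableMixin lock_eq_dec.

Definition lock_lt (a b : lock) : bool :=
  match a, b with
  | Obj x, Obj y | Tx x, Tx y => x < y
  | Obj _, Tx _ => true
  | Tx _, Obj _ => false
  end.

Definition lock_le (a b : lock) : bool := (a == b) || lock_lt a b.

Lemma lock_lt_trans : transitive lock_lt.
Proof. by move=> [y|y] [x|x] [z|z] //=; apply: ltn_trans. Qed.

Lemma lock_ltxx a : lock_lt a a = false.
Proof. by case: a => x /=; rewrite ltnn. Qed.

Lemma lock_lt_le_trans a b c : lock_lt a b -> lock_le b c -> lock_lt a c.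
Proof. by move=> ab /orP[/eqP <- // | /(lock_lt_trans ab)]. Qed.

Lemma acquisitions_cons a s : acquisitions (a :: s) = acq_of a ++ acquisitions s.
Proof. by []. Qed.

Lemma acquisitions_cat s1 s2 :
  acquisitions (s1 ++ s2) = acquisitions s1 ++ acquisitions s2.
Proof. by rewrite /acquisitions map_cat flatten_cat. Qed.

Lemma acquisitions_local s : all is_local s -> acquisitions s = [::].
Proof. by elim: s => [|[l|] s IHs] //= /IHs. Qed.

Lemma acquisitions_take_mono s m n l : m <= n ->
  l \in acquisitions (take m s) -> l \in acquisitions (take n s).
Proof. by move=> le_mn; rewrite -(subnKC le_mn) takeD acquisitions_cat mem_cat => ->. Qed.

Lemma acquisitions_take_nth s n l : n < size s -> nth Local s n = Acq l ->
  l \in acquisitions (take n.+1 s).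
Proof.
move=> lt_n_s sn_l; rewrite -addn1 takeD acquisitions_cat (drop_nth Local lt_n_s) sn_l.
by rewrite mem_cat mem_head orbT.
Qed.

Lemma acquired_lt_requested s n l l' :
  sorted lock_lt (acquisitions s) -> n < size s -> nth Local s n = Acq l' ->
  l \in acquisitions (take n s) -> lock_lt l l'.
Proof.
move=> sorted_s lt_n_s sn_l' l_acq.
move: sorted_s; rewrite -(cat_take_drop n s) acquisitions_cat (drop_nth Local lt_n_s) sn_l'.
rewrite (sorted_pairwise lock_lt_trans) pairwise_cat => /and3P[/allrelP lt_prefix _ _].
by apply: lt_prefix l_acq _; rewrite mem_head.
Qed.

Lemma ksftm_acquisitions_sorted iv :
  ksftm_shape iv -> sorted lock_lt (acquisitions (iacts iv)).
Proof.
case: iv => [[|x i||i] acts]; rewrite /ksftm_shape /=; try by move/acquisitions_local ->.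
- case=> [/acquisitions_local -> // | [rest [-> /acquisitions_local rest_nil]]].
  by rewrite !acquisitions_cons rest_nil.
- case=> ws [ts [sorted_ws [sorted_ts [_ ->]]]].
  rewrite (sorted_pairwise lock_lt_trans) pairwise_cat !pairwise_map.
  rewrite -!(sorted_pairwise ltn_trans) sorted_ws sorted_ts !andbT.
  by apply/allrelP => _ _ /mapP[x _ ->] /mapP[y _ ->].
Qed.

Section Step.

Variables (prog : program) (s s' : state) (t : nat).
Hypothesis s_t_s' : step prog s t s'.

Lemma step_idx v : idx s' v = idx s v \/ idx s' v = (idx s v).+1.
Proof. by case: s_t_s' => /=; try (by left) => *; case: eqP => [->|]; [right | left]. Qed.

Lemma step_pc_mono v : idx s' v = idx s v -> pc s v <= pc s' v.
Proof.
case: s_t_s' => //= [iv|iv l|iv]; case: eqP => // ->; rewrite ?leqnSn //.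
by move=> _ _ /esym/n_Sn.
Qed.

Lemma step_owner l v : owner s l = Some v -> owner s' l = None \/ owner s' l = Some v.
Proof.
move=> s_l; case: s_t_s' => /=; try by right.
- move=> iv l' _ _ _; case: (lock_eq_dec l l') => [eq_l | _] /=; last by right.
  by subst l'; rewrite s_l.
- by move=> *; rewrite s_l; case: eqP; [left | right].
Qed.

Lemma step_return_releases v l :
  idx s' v <> idx s v -> owner s l = Some v -> owner s' l = None.
Proof. by case: s_t_s' => //= iv _ _; case: eqP => // -> _ ->; rewrite eqxx. Qed.

Lemma step_stalled_requesting :
  prog t (idx s t) <> None -> idx s' t = idx s t -> pc s' t = pc s t ->
  exists l, requesting prog s t l.
Proof.
case: s_t_s' => /=; rewrite ?eqxx.
- by move=> *; exfalso; lia.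
- by move=> *; exfalso; lia.
- by move=> iv l _ prog_t lt_pc nth_pc _ _ _ _; exists l, iv.
- by move=> *; exfalso; lia.
- by move=> ->.
Qed.

Lemma step_acquires_free l :
  requesting prog s t l -> owner s l = None -> owner s' l = Some t.
Proof.
case=> iv [prog_t [lt_pc nth_pc]] free_l.
case: s_t_s' => /= [iv'|iv' l'|iv' l' u|iv'|]; rewrite ?prog_t // => -[<-] {iv'}.
- by rewrite nth_pc.
- by rewrite nth_pc => _ [eq_l] _; subst l'; case: (lock_eq_dec l l).
- by rewrite nth_pc => _ [<-]; rewrite free_l.
- by move=> eq_pc; rewrite eq_pc ltnn in lt_pc.
Qed.

End Step.

Lemma requesting_ext prog s s' v l : idx s v = idx s' v -> pc s v = pc s' v ->
  requesting prog s v l -> requesting prog s' v l.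
Proof. by rewrite /requesting => <- <-. Qed.

Lemma requesting_fun prog s v l l' :
  requesting prog s v l -> requesting prog s v l' -> l = l'.
Proof.
by move=> [iv [prog_v [_ nth_l]]] [iv' [prog_v' [_]]]; rewrite prog_v' in prog_v;
  case: prog_v => ->; rewrite nth_l => -[].
Qed.

Definition consistent (N : nat) (prog : program) (s : state) : Prop :=
  (forall v iv, prog v (idx s v) = Some iv -> pc s v <= size (iacts iv)) /\
  (forall l v, owner s l = Some v -> v < N /\
     exists2 iv, prog v (idx s v) = Some iv &
                 l \in acquisitions (take (pc s v) (iacts iv))).

Lemma consistent_step N prog s t s' :
  t < N -> consistent N prog s -> step prog s t s' -> consistent N prog s'.
Proof.
move=> lt_t_N [pc_le owned].
case=> [iv prog_t lt_pc _|iv l prog_t lt_pc nth_pc _| |iv prog_t _|] //=; split=> //=.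
- by move=> v iv'; case: eqP => [-> | _]; [rewrite prog_t => -[<-] | exact: pc_le].
- move=> l v /owned[lt_v_N [iv' prog_v acq_l]]; split=> //; exists iv' => //.
  by case: eqP => [eq_vt | _] //; subst v; apply: acquisitions_take_mono acq_l.
- by move=> v iv'; case: eqP => [-> | _]; [rewrite prog_t => -[<-] | exact: pc_le].
- move=> l' v; case: (lock_eq_dec l' l) => [eq_l /= [<-] | _ /owned[lt_v_N [iv' prog_v]]].
    subst l'.
    by split=> //; exists iv; rewrite ?eqxx; last exact: acquisitions_take_nth.
  move=> acq_l; split=> //; exists iv' => //.
  by case: eqP => [eq_vt | _] //; subst v; apply: acquisitions_take_mono acq_l.
- by move=> v iv'; case: eqP => [_ _ | _]; [exact: leq0n | exact: pc_le].
- move=> l v; case owner_l: (owner s l) => [u|] //; case: eqP => // ne_ut [<-].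
  by move/eqP/negPf: ne_ut => ->; apply: owned.
Qed.

Lemma nat_ind_from (P : nat -> Prop) k :
  P k -> (forall j, k <= j -> P j -> P j.+1) -> forall j, k <= j -> P j.
Proof.
move=> Pk IH; elim=> [|j IHj]; first by rewrite leqn0 => /eqP <-.
by rewrite leq_eqVlt => /orP[/eqP <- // | le_kj]; apply: IH le_kj (IHj le_kj).
Qed.

Lemma bounded_nondecreasing_stabilizes (f : nat -> nat) B k :
  (forall j, k <= j -> f j <= f j.+1) -> (forall j, k <= j -> f j <= B) ->
  exists2 k', k <= k' & forall j, k' <= j -> f j = f k'.
Proof.
move=> f_mono f_le_B.
have f_mono_from j j' : k <= j -> j <= j' -> f j <= f j'.
  move=> le_kj; apply: (@nat_ind_from (fun j' => f j <= f j')) => // j'' le_jj''.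
  move/leq_trans; apply.
  exact: f_mono (leq_trans le_kj le_jj'').
suff stable_from d j : k <= j -> B - f j <= d ->
    exists2 k', j <= k' & forall j', k' <= j' -> f j' = f k'.
  exact: stable_from (leqnn k) (leqnn _).
elim: d j => [|d IHd] j le_kj gap_j.
  exists j => // j' le_jj'; have := f_le_B _ (leq_trans le_kj le_jj').
  by have := f_mono_from _ _ le_kj le_jj'; lia.
have [[j' [le_jj' ne_f]] | const] := classic (exists j', j <= j' /\ f j' <> f j).
  have le_kj' := leq_trans le_kj le_jj'.
  have [|k' le_j'k' stable] := IHd j' le_kj'.
    by have := f_le_B _ le_kj'; have := f_mono_from _ _ le_kj le_jj'; lia.
  by exists k' => //; apply: leq_trans le_jj' le_j'k'.
by exists j => // j' le_jj'; apply: NNPP => ne_f; apply: const; exists j'.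
Qed.

Section Execution.

Variables (N : nat) (prog : program) (ex : nat -> state) (sched : nat -> nat).
Hypothesis ordered :
  forall t n iv, prog t n = Some iv -> sorted lock_lt (acquisitions (iacts iv)).
Hypothesis ex_exec : execution prog ex sched.
Hypothesis sched_below : threads_below N sched.
Hypothesis sched_fair : fair_scheduler N sched.
Hypothesis locks_fair : fair_locks prog ex.

Let ex_step k : step prog (ex k) (sched k) (ex k.+1) := ex_exec.2 k.

Lemma consistent_ex k : consistent N prog (ex k).
Proof.
elim: k => [|k IHk]; last exact: consistent_step (sched_below k) IHk (ex_step k).
by rewrite ex_exec.1; split=> //= v iv _.
Qed.

Lemma held_lt_requested s v l l' : consistent N prog s ->
  owner s l = Some v -> requesting prog s v l' -> lock_lt l l'.
Proof.
move=> [_ owned] /owned[_ [iv prog_v acq_l]] [iv' [prog_v' [lt_pc nth_pc]]].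
move: prog_v'; rewrite prog_v => -[eq_iv]; subst iv'.
exact: acquired_lt_requested (ordered prog_v) lt_pc nth_pc acq_l.
Qed.

Lemma idx_constant_until_return v i :
  ~ (exists j, i <= j /\ idx (ex j) v = (idx (ex i) v).+1) ->
  forall j, i <= j -> idx (ex j) v = idx (ex i) v.
Proof.
move=> no_return; apply: nat_ind_from => // j le_ij idx_j.
case: (step_idx (ex_step j) v) => [-> // | idx_j1]; exfalso; apply: no_return.
by exists j.+1; split; [exact: leqW | rewrite idx_j1 idx_j].
Qed.

Definition blocked_on (v : nat) (l : lock) : Prop :=
  exists k, forall j, k <= j -> requesting prog (ex j) v l.

Lemma blocked_on_fun v l l' : blocked_on v l -> blocked_on v l' -> l = l'.
Proof.
move=> [k req_l] [k' req_l'].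
by apply: requesting_fun (req_l (maxn k k') _) (req_l' _ _); rewrite ?leq_maxl ?leq_maxr.
Qed.

Lemma stalled_thread_blocked v k : v < N -> prog v (idx (ex k) v) <> None ->
  (forall j, k <= j -> idx (ex j) v = idx (ex k) v) -> exists l, blocked_on v l.
Proof.
move=> lt_v_N; case prog_v: (prog v (idx (ex k) v)) => [iv|] // _ idx_const.
have idx_eq j j' : k <= j -> k <= j' -> idx (ex j) v = idx (ex j') v.
  by move=> le_kj le_kj'; rewrite !idx_const.
have [k' le_kk' pc_const] :
    exists2 k', k <= k' & forall j, k' <= j -> pc (ex j) v = pc (ex k') v.
  apply: (@bounded_nondecreasing_stabilizes (fun j => pc (ex j) v) (size (iacts iv)))
    => j le_kj /=.
    by apply: (step_pc_mono (ex_step j)); apply: idx_eq => //; apply: leqW.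
  by apply: (consistent_ex j).1; rewrite idx_const.
have [j [le_k'j sched_j]] := sched_fair k' lt_v_N.
have le_kj := leq_trans le_kk' le_k'j.
have [l req_l] : exists l, requesting prog (ex j) v l.
  apply: step_stalled_requesting; first by rewrite -sched_j; apply: ex_step.
  - by rewrite idx_const ?prog_v.
  - by apply: idx_eq => //; apply: leqW.
  - by rewrite !pc_const // leqW.
exists l, j => j' le_jj'; apply: requesting_ext req_l.
  by apply: idx_eq => //; apply: leq_trans le_jj'.
by rewrite !pc_const //; apply: leq_trans le_jj'.
Qed.

Lemma requested_lock_held_forever u l : u < N -> blocked_on u l ->
  exists v k1, forall j, k1 <= j -> owner (ex j) l = Some v.
Proof.
move=> lt_u_N [k req_l].
have [j0 never_released] : exists j0, forall j, j0 <= j -> ~ released_at ex l j.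
  have /not_all_ex_not[j0 no_release] := locks_fair req_l.
  by exists j0 => j le_j0j released; apply: no_release; exists j.
have [[k1 [le_k1 held_k1]] | always_free] :=
  classic (exists k1, maxn k j0 <= k1 /\ owner (ex k1) l <> None).
  case owner_k1: (owner (ex k1) l) held_k1 => [v|] // _.
  exists v, k1; apply: nat_ind_from => // j le_k1j owner_j.
  case: (step_owner (ex_step j) owner_j) => // freed; exfalso.
  apply: (never_released j); last by rewrite /released_at owner_j.
  by apply: leq_trans (leq_trans (leq_maxr _ _) le_k1) le_k1j.
have free j : maxn k j0 <= j -> owner (ex j) l = None.
  by move=> le_j; apply: NNPP => held; apply: always_free; exists j.
have [j [le_j sched_j]] := sched_fair (maxn k j0) lt_u_N.
have step_j := ex_step j; rewrite sched_j in step_j.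
have req_j := req_l _ (leq_trans (leq_maxl _ _) le_j).
by have := step_acquires_free step_j req_j (free _ le_j); rewrite free // leqW.
Qed.

Lemma holder_stalls v l k1 : (forall j, k1 <= j -> owner (ex j) l = Some v) ->
  forall j, k1 <= j -> idx (ex j) v = idx (ex k1) v.
Proof.
move=> held; apply: nat_ind_from => // j le_k1j idx_j; rewrite -idx_j.
apply: NNPP => moved.
by have := step_return_releases (ex_step j) moved (held _ le_k1j); rewrite held // leqW.
Qed.

Lemma blocked_by_greater u l : u < N -> blocked_on u l ->
  exists w l', [/\ w < N, lock_lt l l' & blocked_on w l'].
Proof.
move=> lt_u_N /(requested_lock_held_forever lt_u_N)[v [k1 held]].
have [lt_v_N [iv prog_v _]] := (consistent_ex k1).2 _ _ (held _ (leqnn k1)).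
have [|l' blocked_v] := stalled_thread_blocked lt_v_N _ (holder_stalls held).
  by rewrite prog_v.
exists v, l'; split=> //; have [k2 req_l'] := blocked_v.
apply: (held_lt_requested (consistent_ex (maxn k1 k2))).
  by apply: held; apply: leq_maxl.
by apply: req_l'; apply: leq_maxr.
Qed.

Lemma blocked_chain n u l : u < N -> blocked_on u l ->
  exists2 s : seq nat, uniq s /\ size s = n &
    forall w, w \in s -> w < N /\ exists2 l', lock_le l l' & blocked_on w l'.
Proof.
elim: n u l => [|n IHn] u l lt_u_N blocked_u; first by exists [::].
have [w [l' [lt_w_N lt_ll' blocked_w]]] := blocked_by_greater lt_u_N blocked_u.
have [s [uniq_s size_s] above_l'] := IHn _ _ lt_w_N blocked_w.
exists (u :: s).
  split; last by rewrite /= size_s.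
  rewrite /= uniq_s andbT; apply/negP => /above_l'[_ [l'' le_l'l'' blocked_u']].
  have eq_l := blocked_on_fun blocked_u blocked_u'; subst l''.
  by have := lock_lt_le_trans lt_ll' le_l'l''; rewrite lock_ltxx.
move=> x; rewrite inE => /orP[/eqP -> | /above_l'[lt_x_N [l'' le_l'l'' blocked_x]]].
  by split=> //; exists l => //; rewrite /lock_le eqxx.
split=> //; exists l'' => //; apply/orP; right; exact: lock_lt_le_trans lt_ll' le_l'l''.
Qed.

Lemma no_thread_blocked_forever u l : u < N -> ~ blocked_on u l.
Proof.
move=> lt_u_N blocked_u.
have [s [uniq_s size_s] below_N] := blocked_chain N.+1 lt_u_N blocked_u.
have sub_s : {subset s <= iota 0 N} by move=> w /below_N[lt_w_N _]; rewrite mem_iota.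
by have := uniq_leq_size uniq_s sub_s; rewrite size_iota size_s ltnn.
Qed.

End Execution.

Theorem lemma10 (N : nat) (prog : program) (ex : nat -> state) (sched : nat -> nat) :
  (forall t n iv, prog t n = Some iv -> ksftm_shape iv) ->
  execution prog ex sched ->
  threads_below N sched ->
  fair_scheduler N sched ->
  fair_locks prog ex ->
  forall t i, t < N -> prog t (idx (ex i) t) <> None ->
    exists j, i <= j /\ idx (ex j) t = (idx (ex i) t).+1.
Proof.
move=> shaped ex_exec sched_below sched_fair locks_fair t i lt_t_N pending.
have ordered t' n iv : prog t' n = Some iv -> sorted lock_lt (acquisitions (iacts iv)).
  by move/shaped/ksftm_acquisitions_sorted.
apply: NNPP => never_returns.
have [l blocked_t] := stalled_thread_blocked ex_exec sched_below sched_fair lt_t_N pending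
  (idx_constant_until_return ex_exec never_returns).
exact: (no_thread_blocked_forever ordered ex_exec sched_below sched_fair locks_fair
          lt_t_N blocked_t).
Qed.
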